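(* Every $d$-dimensional perfect lattice $\Lambda$ has a $\mathbb Z$-basis $f_1,\dots,f_d$ such that every minimal vector $v=\sum_{i=1}^d\beta_if_i$ of $\Lambda$ (with $\beta_i\in\mathbb Z$) satisfies $|\beta_i|\le2^{i-1}I_d$ for $i=1,\dots,d$.
   Context: Minimal vectors are the nonzero vectors of minimal length. A $d$-dimensional lattice is perfect if $\{v\otimes v\}$, $v$ ranging over its minimal vectors, spans the $\binom{d+1}{2}$-dimensional space of symmetric tensors in $(\Lambda\otimes\mathbb R)^{\otimes2}$. A lattice is well-rounded if its minimal vectors span $\Lambda\otimes\mathbb R$. $I_d$ is the smallest integer such that whenever $\Lambda$ is a $d$-dimensional lattice and $\Lambda'\subseteq\Lambda$ is a $d$-dimensional well-rounded sublattice whose minimal vectors are all minimal vectors of $\Lambda$, the index $[\Lambda:\Lambda']$ is at most $I_d$. *)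

From Stdlib Require Import Reals ZArith List.
Open Scope R_scope.

(* Vectors of R^d are represented as functions nat -> R; only the first d
   coordinates matter, lattice vectors have zero coordinates beyond d. *)
Definition vec := nat -> R.

Fixpoint sumR (n : nat) (f : nat -> R) : R :=
  match n with
  | O => 0
  | S m => sumR m f + f m
  end.

Definition zcomb (d : nat) (c : nat -> Z) (b : nat -> vec) : vec :=
  fun j => sumR d (fun i => IZR (c i) * b i j).

Definition basis_Rd (d : nat) (b : nat -> vec) : Prop :=
  (forall i j, (i < d)%nat -> (d <= j)%nat -> b i j = 0) /\
  (forall c : nat -> R,
     (forall j, (j < d)%nat -> sumR d (fun i => c i * b i j) = 0) ->
     forall i, (i < d)%nat -> c i = 0).

Definition is_lattice (d : nat) (L : vec -> Prop) : Prop :=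
  exists b, basis_Rd d b /\
    forall v, L v <-> exists c : nat -> Z, forall j, v j = zcomb d c b j.

Definition is_Zbasis (d : nat) (L : vec -> Prop) (f : nat -> vec) : Prop :=
  (forall i, (i < d)%nat -> L (f i)) /\
  (forall v, L v -> exists c : nat -> Z, forall j, v j = zcomb d c f j) /\
  (forall c : nat -> Z, (forall j, zcomb d c f j = 0) ->
     forall i, (i < d)%nat -> c i = 0%Z).

Definition sqnorm (d : nat) (v : vec) : R := sumR d (fun j => v j * v j).

Definition nonzero (d : nat) (v : vec) : Prop := exists j, (j < d)%nat /\ v j <> 0.

Definition minimal_vec (d : nat) (L : vec -> Prop) (v : vec) : Prop :=
  L v /\ nonzero d v /\
  forall w, L w -> nonzero d w -> sqnorm d v <= sqnorm d w.

(* {v (x) v : v minimal} spans the space of symmetric d x d tensors *)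
Definition perfect (d : nat) (L : vec -> Prop) : Prop :=
  forall S : nat -> nat -> R,
    (forall i j, (i < d)%nat -> (j < d)%nat -> S i j = S j i) ->
    exists l : list (R * vec),
      Forall (fun p => minimal_vec d L (snd p)) l /\
      forall i j, (i < d)%nat -> (j < d)%nat ->
        S i j = fold_right (fun p acc => fst p * snd p i * snd p j + acc) 0 l.

Definition well_rounded (d : nat) (L : vec -> Prop) : Prop :=
  forall x : vec,
    exists l : list (R * vec),
      Forall (fun p => minimal_vec d L (snd p)) l /\
      forall j, (j < d)%nat -> x j = fold_right (fun p acc => fst p * snd p j + acc) 0 l.

Definition has_index (L L' : vec -> Prop) (n : nat) : Prop :=
  exists reps : list vec,
    length reps = n /\
    Forall L reps /\
    (forall a b, (a < n)%nat -> (b < n)%nat -> a <> b ->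
       ~ L' (fun j => nth a reps (fun _ => 0) j - nth b reps (fun _ => 0) j)) /\
    (forall v, L v -> exists a, (a < n)%nat /\
       L' (fun j => v j - nth a reps (fun _ => 0) j)).

Definition index_bound (d : nat) (I : nat) : Prop :=
  forall L L' : vec -> Prop,
    is_lattice d L -> is_lattice d L' ->
    (forall v, L' v -> L v) ->
    well_rounded d L' ->
    (forall v, minimal_vec d L' v -> minimal_vec d L v) ->
    forall n, has_index L L' n -> (n <= I)%nat.

Definition is_I (d : nat) (I : nat) : Prop :=
  index_bound d I /\ forall I', index_bound d I' -> (I <= I')%nat.

From Stdlib Require Import Reals ZArith List Lia.
Set Warnings "-notation-overridden,-ambiguous-paths,-notation-incompatible-prefix".
From HB Require Import structures.
From mathcomp Require Import all_boot all_order fingroup perm all_algebra.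
From mathcomp Require Import Rstruct ssrZ zify.
Set Implicit Arguments. Unset Strict Implicit. Unset Printing Implicit Defensive.
Import Order.TTheory GRing.Theory Num.Theory.
Local Open Scope ring_scope.

(* Perfection applied to the identity tensor gives [d] independent minimal
   vectors; let [W] be their integer coordinate matrix.  Minimal vectors with a
   nonsingular coordinate matrix [A] span a well-rounded sublattice of index
   [|det A|] (Smith normal form), so every such [|det A|] is at most [I_d].
   Factor [W = H U] with [U] unimodular and [H] upper triangular, each entry
   bounded by the diagonal entry of its row, and take the rows of [U] as the
   basis [f].  If a minimal vector has coordinates [beta] in [f], Cramer's rule
   gives [|det H| |beta_j| <= sum_(k <= j) |det H_k| |H_kj| <= (j + 1) I_d |det H|],
   where [H_k] is [H] with row [k] replaced by [beta], i.e. [W] with a row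
   replaced by the minimal vector.  Hence [|beta_j| <= (j + 1) I_d <= 2^j I_d]. *)

Lemma sumR_big n (F : nat -> R) : sumR n F = \sum_(i < n) F i.
Proof. by elim: n => [|n IH] /=; rewrite ?big_ord0 // big_ord_recr /= IH. Qed.

Lemma IZR_intr (z : Z) : IZR z = (int_of_Z z)%:~R.
Proof.
have IZR_pos p : IZR (Zpos p) = (int_of_Z (Zpos p))%:~R.
  by rewrite IZRposE INRE /= Pos_to_natE.
case: z => [|p|p] //.
rewrite -[Zneg p]/(- Zpos p)%Z opp_IZR IZR_pos.
by rewrite (raddfN (GRing.Additive.clone _ _ int_of_Z _)) mulrNz.
Qed.

Lemma List_nthE (T : Type) (l : list T) n x0 : List.nth n l x0 = nth x0 l n.
Proof. by elim: l n => [|x l IH] [|n] //=. Qed.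

Lemma List_lengthE (T : Type) (l : list T) : List.length l = size l.
Proof. by elim: l => //= x l ->. Qed.

Lemma Forall_map (T U : Type) (P : U -> Prop) (f : T -> U) (s : seq T) :
  (forall x, P (f x)) -> Forall P (map f s).
Proof. by move=> Pf; elim: s => //= x s IH; constructor. Qed.

Lemma fold_right_sum (T : Type) (F : T -> R) (s : seq T) :
  fold_right (fun p acc => F p + acc) 0 s = \sum_(p <- s) F p.
Proof. by elim: s => [|x s IH] /=; rewrite ?big_nil ?big_cons ?IH. Qed.

Lemma Z_abs_absz (z : Z) : Z.abs z = Z.of_nat `|int_of_Z z|%N.
Proof.
case: z => [|p|p] //=; first by rewrite positive_nat_Z.
congr Z.pos; apply: Pos2Nat.inj; rewrite SuccNat2Pos.id_succ prednK //.
exact/ssrnat.ltP/Pos2Nat.is_pos.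
Qed.

Lemma Z_of_nat_expn (m i : nat) : Z.of_nat (m ^ i) = Z.pow (Z.of_nat m) (Z.of_nat i).
Proof.
elim: i => [|i IH] //; rewrite expnS mulnE Nat2Z.inj_mul IH Nat2Z.inj_succ.
by rewrite Z.pow_succ_r //; apply: Nat2Z.is_nonneg.
Qed.

Lemma Z_abs_le_pow2 (z : Z) (i m : nat) : (`|int_of_Z z| <= 2 ^ i * m)%N ->
  Z.le (Z.abs z) (Z.mul (Z.pow (Z.of_nat 2) (Z.of_nat i)) (Z.of_nat m)).
Proof. by rewrite Z_abs_absz -Z_of_nat_expn -Nat2Z.inj_mul; lia. Qed.

Definition ext_ord n T (x0 : T) (F : 'I_n -> T) (i : nat) : T :=
  if insub i is Some k then F k else x0.

Lemma ext_ordE n T (x0 : T) (F : 'I_n -> T) (k : 'I_n) : ext_ord x0 F k = F k.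
Proof. by rewrite /ext_ord; case: insubP => [k' _ /val_inj -> | ]; rewrite ?ltn_ord. Qed.

Definition lincomb n (r : 'rV[int]_n) (g : nat -> vec) : vec :=
  fun j => \sum_(i < n) (r 0 i)%:~R * g i j.

Definition rowvecs m n (A : 'M[int]_(m, n)) (g : nat -> vec) : nat -> vec :=
  ext_ord (fun _ => 0) (fun k => lincomb (row k A) g).

Definition row_of_Z n (c : nat -> Z) : 'rV[int]_n := \row_(i < n) int_of_Z (c i).

Definition Z_of_row n (r : 'rV[int]_n) : nat -> Z := ext_ord Z0 (fun i => Z_of_int (r 0 i)).

Lemma Z_of_rowK n (r : 'rV[int]_n) : row_of_Z n (Z_of_row r) = r.
Proof. by apply/rowP => i; rewrite mxE /Z_of_row ext_ordE Z_of_intK. Qed.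

Lemma zcombE n c g j : zcomb n c g j = lincomb (row_of_Z n c) g j.
Proof. by rewrite /zcomb sumR_big; apply: eq_bigr => i _; rewrite mxE IZR_intr. Qed.

Lemma rowvecsE m n (A : 'M[int]_(m, n)) g (k : 'I_m) :
  rowvecs A g k = lincomb (row k A) g.
Proof. exact: ext_ordE. Qed.

Lemma lincomb_mul m n (r : 'rV[int]_m) (A : 'M[int]_(m, n)) g j :
  lincomb (r *m A) g j = lincomb r (rowvecs A g) j.
Proof.
rewrite /lincomb; under [RHS]eq_bigr => k _ do rewrite rowvecsE /lincomb mulr_sumr.
rewrite exchange_big; apply: eq_bigr => i _ /=.
rewrite mxE rmorph_sum mulr_suml; apply: eq_bigr => k _.
by rewrite mxE rmorphM mulrA.
Qed.

Lemma lincombB n (r1 r2 : 'rV[int]_n) g j :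
  lincomb (r1 - r2) g j = lincomb r1 g j - lincomb r2 g j.
Proof.
rewrite /lincomb -sumrB; apply: eq_bigr => i _.
by rewrite !mxE rmorphB mulrBl.
Qed.

Lemma lincomb_delta n (A : 'M[int]_n) g (k : 'I_n) :
  lincomb (delta_mx 0 k *m A) g = rowvecs A g k.
Proof. by rewrite rowvecsE -rowE. Qed.

Definition basis_mx n (b : nat -> vec) : 'M[R]_n := \matrix_(i, j) b i j.

Lemma lincomb_mx n (r : 'rV[int]_n) b (j : 'I_n) :
  lincomb r b j = (map_mx intr r *m basis_mx n b) 0 j.
Proof. by rewrite mxE; apply: eq_bigr => i _; rewrite !mxE. Qed.

Lemma rowvecs_mx m n (A : 'M[int]_(m, n)) b (k : 'I_m) (j : 'I_n) :
  rowvecs A b k j = (map_mx intr A *m basis_mx n b) k j.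
Proof. by rewrite rowvecsE mxE; apply: eq_bigr => i _; rewrite !mxE. Qed.

Section IntegralIndex.

Variable n : nat.

Definition rowlat (A : 'M[int]_n) (r : 'rV[int]_n) : Prop := exists x, r = x *m A.

Definition int_index (S : 'rV[int]_n -> Prop) (k : nat) : Prop :=
  exists reps : seq 'rV[int]_n, [/\ size reps = k,
    forall a c, (a < k)%N -> (c < k)%N -> S (reps`_a - reps`_c) -> a = c &
    forall r, exists2 a, (a < k)%N & S (r - reps`_a)].

Lemma eq_of_dvdz_sub (u v m : nat) (q d : int) :
  (u < m)%N -> (v < m)%N -> `|d|%N = m -> u%:Z - v%:Z = q * d -> u = v.
Proof.
move=> ltum ltvm absd /(congr1 absz); rewrite abszM absd.
case: (absz q) => [|k]; rewrite ?mul0n ?mulSn; lia.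
Qed.

Lemma int_index_diag (d : 'rV[int]_n) : (forall i, d 0 i != 0) ->
  int_index (rowlat (diag_mx d)) (\prod_i `|d ord0 i|)%N.
Proof.
move=> d_neq0; pose T := {dffun forall i : 'I_n, 'I_`|d ord0 i|}.
pose rrow (t : T) : 'rV[int]_n := \row_i (t i : nat)%:Z.
have sizeT : size (enum T) = (\prod_i `|d ord0 i|)%N.
  rewrite -cardE card_dep_ffun foldrE big_map big_enum /=.
  by apply: eq_big => [i|i _]; rewrite ?inE ?card_ord.
exists (map rrow (enum T)); split; first by rewrite size_map.
- move=> a c lta ltc [x]; rewrite -sizeT in lta ltc.
  have t0 : T by apply: finfun => i; exists 0%N; rewrite absz_gt0 d_neq0.
  rewrite (nth_map t0 _ _ lta) (nth_map t0 _ _ ltc) => /rowP eq_ac.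
  apply/eqP; rewrite -(nth_uniq t0 lta ltc (enum_uniq T)); apply/eqP.
  apply/ffunP => i; apply/val_inj.
  apply: (eq_of_dvdz_sub (ltn_ord _) (ltn_ord _) (erefl _) (q := x 0 i)).
  by have := eq_ac i; rewrite mul_mx_diag !mxE.
- move=> r.
  have lt_mod i : (`|modz (r ord0 i) (d ord0 i)| < `|d ord0 i|)%N.
    by rewrite -ltz_nat gez0_abs ?modz_ge0 ?ltz_mod.
  pose t : T := [ffun i => Ordinal (lt_mod i)].
  exists (index t (enum T)); first by rewrite -sizeT index_mem mem_enum.
  rewrite (nth_map t) ?index_mem ?mem_enum // nth_index ?mem_enum //.
  exists (\row_i divz (r 0 i) (d 0 i)); apply/rowP => i.
  rewrite mul_mx_diag !mxE ffunE /= gez0_abs ?modz_ge0 //.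
  by rewrite {1}(divz_eq (r 0 i) (d 0 i)) addrK.
Qed.

Lemma int_index_unimod (P D Q : 'M[int]_n) k :
  P \in unitmx -> Q \in unitmx ->
  int_index (rowlat D) k -> int_index (rowlat (P *m D *m Q)) k.
Proof.
move=> uP uQ [reps [size_reps uniq_reps cover_reps]].
exists (map (mulmx^~ Q) reps); split; first by rewrite size_map.
- move=> a c lta ltc [x]; rewrite -size_reps in lta ltc.
  rewrite !(nth_map 0) // -mulmxBl => /(congr1 (mulmx^~ (invmx Q))).
  rewrite mulmxK // => eq_ac; apply: uniq_reps; rewrite -?size_reps //.
  by exists (x *m P); rewrite eq_ac !mulmxA mulmxK.
- move=> r; have [a lta [y eq_a]] := cover_reps (r *m invmx Q).
  exists a => //; rewrite (nth_map 0) ?size_reps //.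
  exists (y *m invmx P); rewrite -[r](mulmxKV uQ) -mulmxBl eq_a.
  by rewrite !mulmxA mulmxKV.
Qed.

Lemma abs_det_unimod (U : 'M[int]_n) : U \in unitmx -> `|\det U|%N = 1%N.
Proof. by rewrite unitmxE => /orP [] /eqP ->. Qed.

Lemma int_index_det (A : 'M[int]_n) : \det A != 0 -> int_index (rowlat A) `|\det A|%N.
Proof.
move=> detA_neq0; have [P uP [Q uQ [dd _ defA]]] := int_Smith_normal_form A.
pose d : 'rV[int]_n := \row_i dd`_i.
have defD : \matrix_(i, j) (dd`_i *+ (i == j :> nat)) = diag_mx d.
  by apply/matrixP => i j; rewrite !mxE.
rewrite defD in defA.
have absdetA : `|\det A|%N = (\prod_i `|d ord0 i|)%N.
  rewrite defA !det_mulmx !abszM (abs_det_unimod uP) (abs_det_unimod uQ).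
  by rewrite mul1n muln1 det_diag (big_morph absz abszM (erefl _)).
rewrite absdetA defA; apply: int_index_unimod => //; apply: int_index_diag => i.
apply: contraNneq detA_neq0 => di0.
by rewrite defA !det_mulmx det_diag (bigD1 i) //= di0 mul0r mulr0 mul0r.
Qed.

End IntegralIndex.

Section RowSet.

Variables (R : comPzRingType) (n : nat).

Definition row_set (k : 'I_n) (r : 'rV[R]_n) (H : 'M[R]_n) : 'M[R]_n :=
  \matrix_(i, j) if i == k then r 0 j else H i j.

Lemma row_setM k r H (U : 'M[R]_n) :
  row_set k (r *m U) (H *m U) = row_set k r H *m U.
Proof.
apply/matrixP => i j; rewrite !mxE; case: eqP => [-> | /eqP/negbTE ne_ik].
  by apply: eq_bigr => m _; rewrite mxE eqxx.
by apply: eq_bigr => m _; rewrite mxE ne_ik.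
Qed.

Lemma det_row_set k r H : \det (row_set k r H) = (r *m \adj H) 0 k.
Proof.
rewrite (expand_det_row _ k) mxE; apply: eq_bigr => j _.
rewrite !mxE eqxx; congr (_ * _); rewrite /cofactor; congr (_ * \det _).
by apply/matrixP => a c; rewrite !mxE eq_sym (negbTE (neq_lift k a)).
Qed.

End RowSet.

(* Cramer's rule [det H *: r = (r *m \adj H) *m H] bounds the coordinates of [r]
   in the rows of [H] by the minors [det (row_set k r H)]. *)
Lemma cramer_abs_le n (H : 'M[int]_n) (r : 'rV[int]_n) (I : nat) (j : 'I_n) :
  \det H != 0 -> (forall k, absz (\det (row_set k r H)) <= I)%N ->
  (forall k, absz (H k j) <= absz (\det H))%N ->
  (absz (r 0%R j) <= I * #|[pred k | H k j != 0]|)%N.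
Proof.
move=> detH_neq0 le_row_set le_Hj.
have /rowP /(_ j) : \det H *: r = (r *m \adj H) *m H.
  by rewrite -mulmxA mul_adj_mx mul_mx_scalar.
rewrite !mxE => cramer.
rewrite -(@leq_pmul2l `|\det H|) ?absz_gt0 // -abszM cramer -lez_nat abszE.
apply: le_trans (ler_norm_sum _ _ _) _.
rewrite (bigID (fun k => H k j != 0)) /= [X in _ + X]big1 ?addr0; last first.
  by move=> k /negbNE /eqP ->; rewrite mulr0 normr0.
apply: le_trans (_ : \sum_(k | H k j != 0) (I%:Z * `|\det H|%:Z) <= _).
  apply: ler_sum => k _; rewrite normrM -det_row_set !abszE.
  by apply: ler_pM; rewrite ?lez_nat.
by rewrite sumr_const -mulr_natr natz -!PoszM lez_nat mulnCA mulnA.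
Qed.

Lemma card_le_ord n (j : 'I_n) (P : {pred 'I_n}) :
  (forall k, k \in P -> k <= j)%N -> (#|P| <= j.+1)%N.
Proof.
move=> le_Pj; rewrite -[j.+1]card_ord.
apply: leq_trans (leq_image_card (widen_ord (ltn_ord j)) 'I_j.+1).
apply/subset_leq_card/subsetP => k Pk; apply/imageP.
by exists (Ordinal (le_Pj k Pk : k < j.+1)%N) => //; apply: val_inj.
Qed.

Lemma trig_diag_neq0 n (H : 'M[int]_n) i : is_trig_mx H -> \det H != 0 -> H i i != 0.
Proof. by move=> /det_trig ->; move/prodf_neq0; apply. Qed.

Lemma abs_diag_le_det n (H : 'M[int]_n) k :
  is_trig_mx H -> \det H != 0 -> (`|H k k| <= `|\det H|)%N.
Proof.
move=> trigH; rewrite det_trig // (bigD1 k) //= abszM mulf_eq0 negb_or.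
by case/andP=> _ rest_neq0; rewrite leq_pmulr // absz_gt0.
Qed.

(* A unimodular column operation turns the first row into its Smith form
   [x 0 ... 0]; then recurse on the lower right block. *)
Lemma int_trig_factor n (W : 'M[int]_n) :
  exists U H : 'M[int]_n, [/\ U \in unitmx, W = H *m U & is_trig_mx H].
Proof.
elim: n W => [|n IH] W.
  by exists 1%:M, W; rewrite unitmx1 mulmx1; split=> //; apply/is_trig_mxP => -[].
pose r : 'M[int]_(1, 1 + n) := usubmx (W : 'M_(1 + n)).
have [Lr uLr [Rr uRr [dd _ def_r]]] := int_Smith_normal_form r.
pose W1 : 'M[int]_(1 + n) := W *m invmx Rr.
have ursub_W1 : ursubmx W1 = 0.
  apply/matrixP => i j; rewrite !mxE.
  have : (r *m invmx Rr) i (rshift 1 j) = 0.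
    rewrite def_r mulmxK // !mxE big1 // => k _; rewrite !mxE.
    by rewrite (ord1 k) /= mulr0n mulr0.
  move=> r_i; rewrite -[RHS]r_i mxE; apply: eq_bigr => k _.
  by rewrite [r _ _]mxE.
have [U' [H' [uU' def_W1 trigH']]] := IH (drsubmx W1).
exists (block_mx 1 0 0 U' *m Rr), (block_mx (ulsubmx W1) 0 (dlsubmx W1) H'); split.
- by rewrite unitmx_mul uRr andbT unitmxE (@det_lblock _ 1 n) det1 mul1r -unitmxE.
- rewrite mulmxA (@mulmx_block _ 1 n 1 n 1 n) !mulmx0 !mul0mx !mulmx1 !addr0 !add0r.
  by rewrite -def_W1 -ursub_W1 submxK /W1 mulmxKV.
- apply/is_trig_mxP => i j.
  case: (@split_ordP 1 n i) => i0 ->; case: (@split_ordP 1 n j) => j0 ->.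
  + by rewrite (ord1 i0) (ord1 j0).
  + by rewrite (@block_mxEur _ 1 n 1 n) mxE.
  + by rewrite /= (ord1 j0) ltnNge.
  + by rewrite (@block_mxEdr _ 1 n 1 n) /= ltn_add2l; apply/is_trig_mxP.
Qed.

Section TrigReduce.

Variables (n : nat) (H : 'M[int]_n).
Hypotheses (trigH : is_trig_mx H) (diagH_neq0 : forall i, H i i != 0).

Lemma trig_col_reduce (c : 'cV[int]_n) (j : 'I_n) :
  exists t : 'cV[int]_n, (forall m : 'I_n, (m <= j)%N -> t m 0 = 0) /\
    forall i : 'I_n, (j < i)%N -> leq (absz ((c - H *m t)%R i 0%R)) (absz (H i i)).
Proof.
suff /(_ n (leqnn n)) [t [t_j red_t]] : forall k, (k <= n)%N ->
    exists t : 'cV[int]_n, (forall m : 'I_n, (m <= j)%N -> t m 0 = 0) /\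
      forall i : 'I_n, (j < i)%N -> (i < k)%N -> leq (absz ((c - H *m t)%R i 0%R)) (absz (H i i)).
  by exists t; split=> // i lt_ji; apply: red_t lt_ji (ltn_ord i).
elim=> [|k IH] le_kn; first by exists 0; split=> [m _|//]; rewrite mxE.
have [t [t_j red_t]] := IH (ltnW le_kn).
have [le_kj | lt_jk] := leqP k j.
  by exists t; split=> // i lt_ji lt_ik; apply: red_t; lia.
pose kk := Ordinal le_kn; have [rr def_rr] : {rr | rr = c - H *m t} by eexists.
pose s := divz (rr kk 0) (H kk kk).
exists (t + s *: delta_mx kk 0); split.
  move=> m le_mj; rewrite !mxE t_j // add0r.
  have /negbTE -> : m != kk by apply: contraTneq le_mj => ->; rewrite -ltnNge.
  by rewrite mulr0.
have -> : c - H *m (t + s *: delta_mx kk 0) = rr - s *: col kk H.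
  by rewrite def_rr mulmxDr -scalemxAr -colE opprD addrA.
move=> i lt_ji lt_ik; rewrite !mxE.
case: (ltngtP i k) => [lt_ik' | |eq_ik]; [|lia|].
  by rewrite (is_trig_mxP trigH) // mulr0 subr0 def_rr; apply: red_t.
have -> : i = kk by apply: val_inj.
rewrite /s {1}(divz_eq (rr kk 0) (H kk kk)) addrC addKr.
have Hkk_neq0 := diagH_neq0 kk.
by rewrite -lez_nat gez0_abs ?modz_ge0 // abszE ltW // ltz_mod.
Qed.

Lemma trig_reduce : exists V : 'M[int]_n, [/\ V \in unitmx, is_trig_mx (H *m V) &
  forall i j, (absz ((H *m V)%R i j) <= absz ((H *m V)%R i i))%N].
Proof.
have [t red_t] := fin_all_exists (fun j => trig_col_reduce (col j H) j).
pose T : 'M[int]_n := \matrix_(m, j) t j m 0; pose V := 1%:M - T.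
have T_upper (m j : 'I_n) : (m <= j)%N -> T m j = 0.
  by move=> le_mj; rewrite mxE (proj1 (red_t j)).
have HT0 (i j : 'I_n) : (i <= j)%N -> \sum_m H i m * T m j = 0.
  move=> le_ij; apply: big1 => m _; have [le_mj | lt_jm] := leqP m j.
    by rewrite T_upper ?mulr0.
  by rewrite (is_trig_mxP trigH) ?mul0r //; apply: leq_ltn_trans lt_jm.
have HVE (i j : 'I_n) : (H *m V) i j = H i j - \sum_m H i m * T m j.
  by rewrite mulmxBr mulmx1 !mxE.
have trigV : is_trig_mx V.
  apply/is_trig_mxP => i j lt_ij.
  rewrite mxE [(- T) _ _]mxE T_upper ?(ltnW lt_ij) // oppr0 addr0 mxE.
  by rewrite -val_eqE (ltn_eqF lt_ij).
exists V; split.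
- rewrite unitmxE det_trig // big1 ?unitr1 // => i _.
  by rewrite mxE [(- T) _ _]mxE T_upper // oppr0 addr0 mxE eqxx.
- by apply/is_trig_mxP => i j lt_ij; rewrite HVE (is_trig_mxP trigH) // HT0 ?subr0 // ltnW.
- move=> i j; rewrite !HVE (HT0 i i) // subr0.
  have [lt_ji | lt_ij | /val_inj ->] := ltngtP j i; last by rewrite HT0 ?subr0.
    have -> : \sum_m H i m * T m j = \sum_m H i m * t j m 0.
      by apply: eq_bigr => m _; rewrite mxE.
    by have := proj2 (red_t j) i lt_ji; rewrite !mxE.
  by rewrite (is_trig_mxP trigH) // HT0 ?subr0 // ltnW.
Qed.

End TrigReduce.

Section Reversal.

Variables (R : comUnitRingType) (n : nat).

Definition rev_perm : 'S_n := perm (@rev_ord_inj n).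

Definition revmx (A : 'M[R]_n) : 'M[R]_n :=
  perm_mx rev_perm *m A *m perm_mx rev_perm.

Lemma rev_permV : (rev_perm^-1)%g = rev_perm.
Proof.
rewrite -[LHS]mulg1; have <- : (rev_perm * rev_perm)%g = 1%g.
  by apply/permP => i; rewrite permM !permE rev_ordK.
by rewrite mulKg.
Qed.

Lemma revmxE A i j : revmx A i j = A (rev_ord i) (rev_ord j).
Proof.
by rewrite /revmx -row_permE -{2}rev_permV -col_permE row_permEsub col_permEsub !mxE !permE.
Qed.

Lemma perm_mx_rev_invol : perm_mx rev_perm *m perm_mx rev_perm = 1%:M :> 'M[R]_n.
Proof. by rewrite -perm_mxM -{1}rev_permV mulVg perm_mx1. Qed.

Lemma revmxK : involutive revmx.
Proof.
by move=> A; rewrite /revmx !mulmxA perm_mx_rev_invol mul1mx -mulmxA perm_mx_rev_invol mulmx1.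
Qed.

Lemma revmxM A B : revmx (A *m B) = revmx A *m revmx B.
Proof.
by rewrite /revmx -!mulmxA (mulmxA (perm_mx _) (perm_mx _)) perm_mx_rev_invol mul1mx.
Qed.

Lemma det_revmx A : \det (revmx A) = \det A.
Proof.
by rewrite /revmx !det_mulmx mulrAC -det_mulmx perm_mx_rev_invol det1 mul1r.
Qed.

Lemma revmx_unit A : (revmx A \in unitmx) = (A \in unitmx).
Proof. by rewrite !unitmxE det_revmx. Qed.

End Reversal.

Lemma int_upper_factor n (W : 'M[int]_n) : \det W != 0 ->
  exists U H : 'M[int]_n, [/\ U \in unitmx, W = H *m U, is_trig_mx H^T &
    forall i j, (absz (H i j) <= absz (H i i))%N].
Proof.
move=> detW_neq0; have [U0 [H0 [uU0 defW trigH0]]] := int_trig_factor (revmx W).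
have detH0_neq0 : \det H0 != 0.
  by move: detW_neq0; rewrite -det_revmx defW det_mulmx mulf_eq0 negb_or => /andP [].
have [V [uV trigH reducedH]] := trig_reduce trigH0 (fun i => trig_diag_neq0 i trigH0 detH0_neq0).
exists (revmx (invmx V *m U0)), (revmx (H0 *m V)); split.
- by rewrite revmx_unit unitmx_mul unitmx_inv uV.
- by rewrite -revmxM mulmxA mulmxK // -defW revmxK.
- apply/is_trig_mxP => i j lt_ij; rewrite mxE revmxE (is_trig_mxP trigH) //=.
  by have := ltn_ord j; lia.
- by move=> i j; rewrite !revmxE.
Qed.

Lemma card_upper_col n (H : 'M[int]_n) j :
  is_trig_mx H^T -> (#|[pred k | H k j != 0]| <= j.+1)%N.
Proof.
move=> upperH; apply: card_le_ord => k; rewrite inE; apply: contraR.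
by rewrite -ltnNge => lt_jk; have := (is_trig_mxP upperH) _ _ lt_jk; rewrite mxE => ->.
Qed.

Section LatticeBasis.

Variables (n : nat) (b : nat -> vec).
Hypothesis basis_b : basis_Rd n b.

Lemma lincomb_out (r : 'rV[int]_n) j : (n <= j)%N -> lincomb r b j = 0.
Proof.
move=> le_nj; rewrite /lincomb big1 // => i _.
by rewrite (proj1 basis_b) ?mulr0 //; have := ltn_ord i; lia.
Qed.

Lemma basis_mx_unit : basis_mx n b \in unitmx.
Proof.
rewrite unitmxE unitfE; apply/negP => /det0P [c /eqP c_neq0 cB0]; apply: c_neq0.
apply/rowP => i; rewrite mxE -(ext_ordE 0 (c 0)).
apply: (proj2 basis_b) => [j lt_jn|]; last by have := ltn_ord i; lia.
have /rowP /(_ (Ordinal (introT ssrnat.ltP lt_jn))) := cB0.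
rewrite !mxE => cB0j; rewrite sumR_big -[RHS]cB0j; apply: eq_bigr => k _.
by rewrite ext_ordE mxE.
Qed.

Lemma lincomb_inj (r1 r2 : 'rV[int]_n) :
  (forall j, (j < n)%N -> lincomb r1 b j = lincomb r2 b j) -> r1 = r2.
Proof.
move=> eq_r; have : map_mx intr r1 *m basis_mx n b = map_mx intr r2 *m basis_mx n b.
  by apply/rowP => j; rewrite -!lincomb_mx eq_r.
move/(can_inj (mulmxK basis_mx_unit))/rowP => eq_r12.
by apply/rowP => i; apply: (@intr_inj R); have := eq_r12 i; rewrite !mxE.
Qed.

Lemma rowvecs_basis (A : 'M[int]_n) : \det A != 0 -> basis_Rd n (rowvecs A b).
Proof.
move=> detA_neq0; split=> [i j lt_in le_nj|c c_ker i lt_in].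
  by rewrite -[i]/(val (Ordinal (introT ssrnat.ltP lt_in))) rowvecsE lincomb_out //; lia.
have uAB : map_mx intr A *m basis_mx n b \in unitmx.
  by rewrite unitmx_mul basis_mx_unit andbT unitmxE unitfE det_map_mx intr_eq0.
have : \row_k c k *m (map_mx intr A *m basis_mx n b) = 0.
  apply/rowP => j; rewrite !mxE -[RHS](c_ker j); last by have := ltn_ord j; lia.
  by rewrite sumR_big; apply: eq_bigr => k _; rewrite mxE rowvecs_mx.
move/(congr1 (mulmx^~ (invmx (map_mx intr A *m basis_mx n b)))).
rewrite mulmxK // mul0mx => /rowP /(_ (Ordinal (introT ssrnat.ltP lt_in))).
by rewrite !mxE.
Qed.

Lemma basis_Rd_Zfree (g : nat -> vec) c :
  basis_Rd n g -> (forall j, zcomb n c g j = 0) -> forall i, (i < n)%coq_nat -> c i = Z0.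
Proof.
move=> [_ indep] c_ker i lt_in; apply: eq_IZR.
exact: (indep (fun i => IZR (c i))) (fun j _ => c_ker j) i lt_in.
Qed.

Variable L : vec -> Prop.
Hypothesis L_def : forall v, L v <-> exists c : nat -> Z, forall j, v j = zcomb n c b j.

Lemma latticeP v : L v <-> exists r : 'rV[int]_n, forall j, v j = lincomb r b j.
Proof.
rewrite L_def; split=> [[c def_v]|[r def_v]].
  by exists (row_of_Z n c) => j; rewrite def_v zcombE.
by exists (Z_of_row r) => j; rewrite def_v zcombE Z_of_rowK.
Qed.

Lemma minimal_vec_eq v w :
  (forall j, v j = w j) -> minimal_vec n L v -> minimal_vec n L w.
Proof.
move=> eq_vw [/latticeP [r def_v] [[j [lt_jn v_j]] min_v]]; split.
  by apply/latticeP; exists r => k; rewrite -eq_vw.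
split=> [|u Lu u_neq0]; first by exists j; rewrite -eq_vw.
have := min_v u Lu u_neq0; rewrite /sqnorm !sumR_big.
by rewrite (eq_bigr (fun k : 'I_n => w k * w k)) // => k _; rewrite !eq_vw.
Qed.

Lemma unimod_Zbasis (U : 'M[int]_n) : U \in unitmx -> is_Zbasis n L (rowvecs U b).
Proof.
move=> uU; split; [|split].
- move=> i lt_in; apply/latticeP; rewrite -[i]/(val (Ordinal (introT ssrnat.ltP lt_in))).
  by exists (row (Ordinal (introT ssrnat.ltP lt_in)) U) => j; rewrite rowvecsE.
- move=> v /latticeP [r def_v]; exists (Z_of_row (r *m invmx U)) => j.
  by rewrite zcombE Z_of_rowK -lincomb_mul mulmxKV.
- move=> c c_ker; apply: (basis_Rd_Zfree _ c_ker); apply: rowvecs_basis.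
  by have := uU; rewrite unitmxE; apply: contraTneq => ->.
Qed.

Definition rowspan (A : 'M[int]_n) : vec -> Prop :=
  fun v => exists c : nat -> Z, forall j, v j = zcomb n c (rowvecs A b) j.

Lemma rowspanP (A : 'M[int]_n) v : rowspan A v <-> exists r, forall j, v j = lincomb (r *m A) b j.
Proof.
split=> [[c def_v]|[r def_v]].
  by exists (row_of_Z n c) => j; rewrite def_v zcombE lincomb_mul.
by exists (Z_of_row r) => j; rewrite def_v zcombE Z_of_rowK lincomb_mul.
Qed.

Lemma rowspan_sub (A : 'M[int]_n) v : rowspan A v -> L v.
Proof. by move=> /rowspanP [r def_v]; apply/latticeP; exists (r *m A). Qed.

Lemma rowvecs_rowspan (A : 'M[int]_n) (k : 'I_n) : rowspan A (rowvecs A b k).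
Proof. by apply/rowspanP; exists (delta_mx 0 k) => j; rewrite lincomb_delta. Qed.

Lemma rowspan_lattice (A : 'M[int]_n) : \det A != 0 -> is_lattice n (rowspan A).
Proof. by move=> detA_neq0; exists (rowvecs A b); split; [apply: rowvecs_basis|]. Qed.

Lemma has_index_rowspan (A : 'M[int]_n) : \det A != 0 -> has_index L (rowspan A) `|\det A|%N.
Proof.
move=> /int_index_det [reps [size_reps uniq_reps cover_reps]].
exists (map (fun r => lincomb r b) reps); split; [|split; [|split]].
- by rewrite List_lengthE size_map.
- by apply: Forall_map => r; apply/latticeP; exists r.
- move=> a c /ssrnat.ltP lta /ssrnat.ltP ltc neq_ac /rowspanP [x eq_x].
  apply/neq_ac/uniq_reps => //.
  exists x; apply: lincomb_inj => j _; rewrite lincombB -eq_x.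
  by rewrite !List_nthE !(nth_map 0) ?size_reps.
- move=> v /latticeP [r def_v]; have [a lta [x eq_a]] := cover_reps r.
  exists a; split; first exact/ssrnat.ltP.
  apply/rowspanP; exists x => j.
  by rewrite List_nthE (nth_map 0) ?size_reps // -eq_a lincombB def_v.
Qed.

Section MinimalRows.

Variable A : 'M[int]_n.
Hypothesis minimal_rows : forall k : 'I_n, minimal_vec n L (rowvecs A b k).

Lemma minimal_rows_rowspan (k : 'I_n) : minimal_vec n (rowspan A) (rowvecs A b k).
Proof.
have [_ [v_neq0 min_v]] := minimal_rows k; split; first exact: rowvecs_rowspan.
by split=> // w /rowspan_sub; apply: min_v.
Qed.

(* The minimal vectors of the sublattice are as short as its rows, which are
   minimal in [L]. *)
Lemma minimal_rowspan_minimal v : minimal_vec n (rowspan A) v -> minimal_vec n L v.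
Proof.
move=> [span_v [v_neq0 min_v]]; split; first exact: (rowspan_sub span_v).
split=> // w Lw w_neq0; have [j [lt_jn _]] := v_neq0.
have [_ [row_neq0 min_row]] := minimal_rows (Ordinal (introT ssrnat.ltP lt_jn)).
exact: Rle_trans (min_v _ (rowvecs_rowspan _ _) row_neq0) (min_row _ Lw w_neq0).
Qed.

Lemma rowspan_well_rounded : \det A != 0 -> well_rounded n (rowspan A).
Proof.
move=> detA_neq0 x.
have uAB : map_mx intr A *m basis_mx n b \in unitmx.
  by rewrite unitmx_mul basis_mx_unit andbT unitmxE unitfE det_map_mx intr_eq0.
pose t := \row_j x j *m invmx (map_mx intr A *m basis_mx n b).
exists (map (fun k : 'I_n => (t 0 k, rowvecs A b k)) (enum 'I_n)); split.
  by apply: Forall_map => k; apply: minimal_rows_rowspan.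
move=> j /ssrnat.ltP lt_jn.
have -> : x j = (\row_(k < n) x k) 0 (Ordinal lt_jn) by rewrite mxE.
rewrite -(mulmxKV uAB (\row_k x k)) -/t mxE fold_right_sum big_map big_enum /=.
by apply: eq_bigr => k _; rewrite (rowvecs_mx A b k (Ordinal lt_jn)).
Qed.

Lemma abs_det_le_index_bound I : index_bound n I -> (`|\det A| <= I)%N.
Proof.
move=> bound_I; have [-> // | detA_neq0] := eqVneq (\det A) 0.
apply/ssrnat.leP; apply: (bound_I L (rowspan A)).
- by exists b.
- exact: rowspan_lattice.
- exact: rowspan_sub.
- exact: rowspan_well_rounded.
- exact: minimal_rowspan_minimal.
- exact: has_index_rowspan.
Qed.

End MinimalRows.

(* Perfection applied to the identity tensor writes [1] as a weighted sum of
   [v (x) v] over minimal vectors [v], so these vectors have full rank. *)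
Lemma perfect_minimal_full_rank : perfect n L ->
  exists m (C : 'M[int]_(m, n)),
    row_full (map_mx intr C : 'M[R]_(m, n)) /\ forall p : 'I_m, minimal_vec n L (rowvecs C b p).
Proof.
move=> perfect_L.
have [|l [min_l sum_l]] := perfect_L (fun i j => if Nat.eqb i j then 1 else 0).
  by move=> i j _ _; rewrite Nat.eqb_sym.
pose x0 : R * vec := (0, fun _ => 0); pose m := size l.
pose v (p : 'I_m) := snd (nth x0 l p).
have min_v p : minimal_vec n L (v p).
  move: min_l; rewrite Forall_forall; apply; rewrite /v -List_nthE.
  by apply: nth_In; rewrite List_lengthE; apply/ssrnat.ltP.
have [r def_v] := fin_all_exists (fun p => proj1 (latticeP (v p)) (proj1 (min_v p))).
pose C : 'M[int]_(m, n) := \matrix_(p, i) r p 0 i.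
have CBE p (j : 'I_n) : \sum_i (map_mx intr C) p i * basis_mx n b i j = v p j.
  by rewrite def_v; apply: eq_bigr => i _; rewrite !mxE.
exists m, C; split; last first.
  move=> p; apply: (minimal_vec_eq _ (min_v p)) => j.
  by rewrite def_v rowvecsE; congr (lincomb _ b j); apply/rowP => i; rewrite !mxE.
pose CB := map_mx intr C *m basis_mx n b.
pose Lam : 'M[R]_m := diag_mx (\row_p fst (nth x0 l p)).
have CB_gram : 1%:M = CB^T *m (Lam *m CB).
  apply/matrixP => i j; rewrite [LHS]mxE [RHS]mxE.
  transitivity (if Nat.eqb i j then 1 else 0 : R).
    case: (Nat.eqb_spec i j) => [/val_inj -> | neq_ij]; first by rewrite eqxx.
    by case: eqP => // eq_ij; case: neq_ij; rewrite eq_ij.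
  rewrite sum_l; try exact/ssrnat.ltP/ltn_ord.
  rewrite fold_right_sum (big_nth x0) big_mkord; apply: eq_bigr => p _.
  by rewrite mul_diag_mx !mxE !CBE [RHS]mulrCA mulrA.
rewrite /row_full eqn_leq rank_leq_col /=.
have := mxrankM_maxr CB^T (Lam *m CB); rewrite -CB_gram mxrank1 => rank_n.
apply: leq_trans rank_n _; apply: leq_trans (mxrankM_maxr _ _) _.
exact: mxrankM_maxl.
Qed.

Lemma perfect_minimal_basis : perfect n L ->
  exists W : 'M[int]_n, \det W != 0 /\ forall k : 'I_n, minimal_vec n L (rowvecs W b k).
Proof.
move=> /perfect_minimal_full_rank [m [C [rank_C min_C]]].
exists (rowsub (fullrankfun rank_C) C); split.
  have := fullrowsub_unit rank_C; rewrite -map_mxsub unitmxE unitfE det_map_mx.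
  by rewrite intr_eq0.
move=> k; apply: (minimal_vec_eq _ (min_C (fullrankfun rank_C k))) => j.
by rewrite !rowvecsE; congr (lincomb _ b j); apply/rowP => i; rewrite !mxE.
Qed.

Lemma minimal_rows_row_set (W : 'M[int]_n) k r v :
  (forall j, v j = lincomb r b j) -> minimal_vec n L v ->
  (forall m : 'I_n, minimal_vec n L (rowvecs W b m)) ->
  forall m : 'I_n, minimal_vec n L (rowvecs (row_set k r W) b m).
Proof.
move=> def_v min_v min_W m; have [-> | ne_mk] := eqVneq m k.
  apply: (minimal_vec_eq _ min_v) => j; rewrite def_v rowvecsE.
  by congr (lincomb _ b j); apply/rowP => i; rewrite !mxE eqxx.
apply: (minimal_vec_eq _ (min_W m)) => j; rewrite !rowvecsE.
by congr (lincomb _ b j); apply/rowP => i; rewrite !mxE (negbTE ne_mk).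
Qed.

End LatticeBasis.

Theorem theorem17p1 (d : nat) (Id : nat) (L : vec -> Prop) :
  is_I d Id ->
  is_lattice d L ->
  perfect d L ->
  exists f : nat -> vec,
    is_Zbasis d L f /\
    forall v, minimal_vec d L v ->
      forall beta : nat -> Z, (forall j, v j = zcomb d beta f j) ->
        forall i, (i < d)%coq_nat ->
          Z.le (Z.abs (beta i)) (Z.mul (Z.pow (Zpos (xO xH)) (Z.of_nat i)) (Z.of_nat Id)).
Proof.
move=> [bound_Id _] [b [basis_b L_def]] perfect_L.
have [W [detW_neq0 min_W]] := perfect_minimal_basis L_def perfect_L.
have [U [H [uU defW upperH reducedH]]] := int_upper_factor detW_neq0.
have detH_neq0 : \det H != 0.
  by apply: contraNneq detW_neq0; rewrite defW det_mulmx => ->; rewrite mul0r.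
exists (rowvecs U b); split; first exact: unimod_Zbasis.
move=> v min_v beta def_v i /ssrnat.ltP lt_id; pose r := row_of_Z d beta.
have def_vr j : v j = lincomb (r *m U) b j by rewrite def_v zcombE lincomb_mul.
have le_row_set k : (absz (\det (row_set k r H)) <= Id)%N.
  rewrite -[X in (X <= _)%N]muln1 -(abs_det_unimod uU) -abszM -det_mulmx -row_setM -defW.
  apply: (abs_det_le_index_bound basis_b L_def _ bound_Id).
  exact: minimal_rows_row_set def_vr min_v min_W.
have le_Hj k : (absz (H k (Ordinal lt_id)) <= absz (\det H))%N.
  apply: leq_trans (reducedH _ _) _.
  by have := abs_diag_le_det k upperH; rewrite det_tr mxE; apply.
apply: Z_abs_le_pow2.
have -> : int_of_Z (beta i) = r 0 (Ordinal lt_id) by rewrite mxE.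
apply: leq_trans (cramer_abs_le detH_neq0 le_row_set le_Hj) _.
rewrite mulnC leq_mul2r (leq_trans (card_upper_col (Ordinal lt_id) upperH)) ?orbT //.
exact: ltn_expl.
Qed.
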